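(* Let $\mathcal U\in\mathrm{Ch}(A'B',AB)$ be a two-qubit unitary channel ($|A'|=|B'|=|A|=|B|=2$) with Choi state $\Phi^{\mathcal U}_{R_AAR_BB}$. Then the state \[ \rho_{R_BB}:=\frac{\sqrt{\Phi^{\mathcal U}_{R_BB}}}{\operatorname{tr}\sqrt{\Phi^{\mathcal U}_{R_BB}}} \] is the Choi state of a unital qubit channel from $B'$ to $B$; that is, $\operatorname{tr}_B\rho_{R_BB}=\mathbb 1_{R_B}/2$ and $\operatorname{tr}_{R_B}\rho_{R_BB}=\mathbb 1_B/2$.
   Context: Maximally entangled state $\Phi_{RX}:=\frac1{|X|}\sum_{i,j}|ii\rangle\langle jj|$; Choi state of a bipartite channel $\mathcal N$ from $A'B'$ to $AB$: $\Phi^{\mathcal N}_{R_AAR_BB}:=(\mathrm{id}_{R_AR_B}\otimes\mathcal N)(\Phi_{R_AA'}\otimes\Phi_{R_BB'})$ with $R_A\simeq A'$, $R_B\simeq B'$; $\Phi^{\mathcal U}_{R_BB}$ denotes its marginal on $R_BB$. *)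

From HB Require Import structures.
From mathcomp Require Import all_boot all_order all_algebra.
From mathcomp Require Export spectral sesquilinear.
From mathcomp Require Export mxtens.
Set Implicit Arguments.
Unset Strict Implicit.
Unset Printing Implicit Defensive.
Import Order.TTheory GRing.Theory Num.Theory.
Local Open Scope ring_scope.
Local Open Scope sesquilinear_scope.

Section QDefs.
Variable C : numClosedFieldType.

(* Composite index: the pair (i, j) of 'I_m * 'I_n is the index i*n+j of 'I_(m*n). *)
Definition tidx {m n} (i : 'I_m) (j : 'I_n) : 'I_(m * n) := mxtens_index (i, j).
Definition fstidx {m n} (k : 'I_(m * n)) : 'I_m := (mxtens_unindex k).1.
Definition sndidx {m n} (k : 'I_(m * n)) : 'I_n := (mxtens_unindex k).2.

Definition maxent (n : nat) : 'M[C]_(n * n) :=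
  (n%:R)^-1 *: \matrix_(k, l)
     ((fstidx k == sndidx k) && (fstidx l == sndidx l))%:R.

Definition ptrace2 {m n} (X : 'M[C]_(m * n)) : 'M[C]_m :=
  \matrix_(i, j) \sum_(k < n) X (tidx i k) (tidx j k).
Definition ptrace1 {m n} (X : 'M[C]_(m * n)) : 'M[C]_n :=
  \matrix_(i, j) \sum_(k < m) X (tidx k i) (tidx k j).

(* (id_M (x) N) for a (linear) map N : 'M_p -> 'M_q, acting blockwise. *)
Definition id_tens {m p q} (N : 'M[C]_p -> 'M[C]_q) (X : 'M[C]_(m * p))
  : 'M[C]_(m * q) :=
  \matrix_(k, l) N (\matrix_(u, v) X (tidx (fstidx k) u) (tidx (fstidx l) v))
                   (sndidx k) (sndidx l).

(* Reordering of tensor factors  (X1 X2)(X3 X4) -> (X1 X3)(X2 X4). *)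
Definition swap_mid_idx {a b c d} (k : 'I_((a * c) * (b * d))) : 'I_((a * b) * (c * d)) :=
  tidx (tidx (fstidx (fstidx k)) (fstidx (sndidx k)))
       (tidx (sndidx (fstidx k)) (sndidx (sndidx k))).
Definition swap_mid {a b c d} (X : 'M[C]_((a * b) * (c * d))) : 'M[C]_((a * c) * (b * d)) :=
  \matrix_(k, l) X (swap_mid_idx k) (swap_mid_idx l).

(* Choi state of a bipartite channel N from A'B' to AB, as an operator on
   R_A A R_B B (ordered as (R_A A)(R_B B)):
   (id_{R_A R_B} (x) N)(Phi_{R_A A'} (x) Phi_{R_B B'}). *)
Definition choi_bip {dA' dB' dA dB : nat}
  (N : 'M[C]_(dA' * dB') -> 'M[C]_(dA * dB)) : 'M[C]_((dA' * dA) * (dB' * dB)) :=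
  swap_mid (id_tens N (swap_mid (tensmx (maxent dA') (maxent dB')))).

Definition marg_RBB {m n} (X : 'M[C]_(m * n)) : 'M[C]_n := ptrace1 X.

Definition unitary_channel {n} (U : 'M[C]_n) (X : 'M[C]_n) : 'M[C]_n :=
  U *m X *m U ^t*.

(* Principal matrix square root via the spectral decomposition
   A = P^dagger diag(lambda) P (P unitary): sqrt A = P^dagger diag(sqrt lambda) P,
   with sqrtC the nonnegative square root on nonnegative reals. *)
Definition sqrtm {n} (A : 'M[C]_n) : 'M[C]_n :=
  (spectralmx A) ^t* *m diag_mx (map_mx sqrtC (spectral_diag A)) *m spectralmx A.

End QDefs.

From mathcomp Require Import all_boot all_order all_algebra.
From mathcomp Require Import spectral sesquilinear mxtens.
From mathcomp Require Import ring zify.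
Import Order.TTheory GRing.Theory Num.Theory.
Local Open Scope ring_scope.
Local Open Scope sesquilinear_scope.

(* The R_B B marginal M of the Choi state of U is 1/4 times the Gram matrix of
   a realignment of U, and unitarity of U makes both partial traces of M
   scalar.  On two qubits the matrices with scalar partial traces form the span
   of 1 and the Pauli products s_i (x) s_j, which is closed under the Jordan
   product XY + YX, hence under polynomials.  As sqrt M is a polynomial in M
   (interpolate sqrt on the spectrum), sqrt M has scalar partial traces too,
   and normalising it by its trace, nonzero since M is positive semidefinite of
   trace 1, makes both of them 1/2. *)

Lemma fstidx_tidx m n (i : 'I_m) (j : 'I_n) : fstidx (tidx i j) = i.
Proof. by rewrite /fstidx /tidx mxtens_indexK. Qed.

Lemma sndidx_tidx m n (i : 'I_m) (j : 'I_n) : sndidx (tidx i j) = j.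
Proof. by rewrite /sndidx /tidx mxtens_indexK. Qed.

Lemma tidxK m n (k : 'I_(m * n)) : tidx (fstidx k) (sndidx k) = k.
Proof. by rewrite /fstidx /sndidx /tidx -surjective_pairing mxtens_unindexK. Qed.

Definition tidxE := (fstidx_tidx, sndidx_tidx).

Lemma eq_tidx m n (i i' : 'I_m) (j j' : 'I_n) :
  (tidx i j == tidx i' j') = (i == i') && (j == j').
Proof.
apply/eqP/andP => [E|[/eqP-> /eqP->]//].
by split; apply/eqP; [move/(congr1 fstidx): E | move/(congr1 sndidx): E];
  rewrite !tidxE.
Qed.

Lemma sum_tidx (R : nmodType) m n (F : 'I_(m * n) -> R) :
  \sum_(k < m * n) F k = \sum_(i < m) \sum_(j < n) F (tidx i j).
Proof.
rewrite pair_bigA (reindex (fun p : 'I_m * 'I_n => tidx p.1 p.2)) //=.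
by exists (fun k => (fstidx k, sndidx k)) => [[i j] _|k _]; rewrite ?tidxE ?tidxK.
Qed.

Section PartialTrace.
Variables (C : numClosedFieldType) (m n : nat).
Implicit Types X Y : 'M[C]_(m * n).

Lemma ptrace1D X Y : ptrace1 (X + Y) = ptrace1 X + ptrace1 Y.
Proof.
by apply/matrixP => i j; rewrite !mxE -big_split; apply: eq_bigr => k _; rewrite mxE.
Qed.

Lemma ptrace2D X Y : ptrace2 (X + Y) = ptrace2 X + ptrace2 Y.
Proof.
by apply/matrixP => i j; rewrite !mxE -big_split; apply: eq_bigr => k _; rewrite mxE.
Qed.

Lemma ptrace1Z a X : ptrace1 (a *: X) = a *: ptrace1 X.
Proof.
by apply/matrixP => i j; rewrite !mxE big_distrr; apply: eq_bigr => k _; rewrite mxE.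
Qed.

Lemma ptrace2Z a X : ptrace2 (a *: X) = a *: ptrace2 X.
Proof.
by apply/matrixP => i j; rewrite !mxE big_distrr; apply: eq_bigr => k _; rewrite mxE.
Qed.

Lemma ptrace1_scalar a : ptrace1 (a%:M : 'M[C]_(m * n)) = (a *+ m)%:M.
Proof.
apply/matrixP => i j; rewrite !mxE.
under eq_bigr do rewrite mxE eq_tidx eqxx /=.
by rewrite sumr_const card_ord mulrnAC.
Qed.

Lemma ptrace2_scalar a : ptrace2 (a%:M : 'M[C]_(m * n)) = (a *+ n)%:M.
Proof.
apply/matrixP => i j; rewrite !mxE.
under eq_bigr do rewrite mxE eq_tidx eqxx andbT.
by rewrite sumr_const card_ord mulrnAC.
Qed.

Lemma mxtrace_ptrace1 X : \tr (ptrace1 X) = \tr X.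
Proof.
by rewrite [RHS]/mxtrace sum_tidx exchange_big; apply: eq_bigr => i _; rewrite mxE.
Qed.

Lemma mxtrace_ptrace2 X : \tr (ptrace2 X) = \tr X.
Proof. by rewrite [RHS]/mxtrace sum_tidx; apply: eq_bigr => i _; rewrite mxE. Qed.

End PartialTrace.

Section ScalarMarginals.
Context {C : numClosedFieldType} {m n : nat}.
Implicit Types X Y : 'M[C]_(m * n).

Definition scalar_marginals X := is_scalar_mx (ptrace1 X) && is_scalar_mx (ptrace2 X).

Lemma scalar_marginals_scalar a : scalar_marginals a%:M.
Proof.
by rewrite /scalar_marginals ptrace1_scalar ptrace2_scalar !scalar_mx_is_scalar.
Qed.

Lemma scalar_marginalsD X Y :
  scalar_marginals X -> scalar_marginals Y -> scalar_marginals (X + Y).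
Proof.
case/andP=> /is_scalar_mxP[a1 X1] /is_scalar_mxP[a2 X2].
case/andP=> /is_scalar_mxP[b1 Y1] /is_scalar_mxP[b2 Y2].
rewrite /scalar_marginals ptrace1D ptrace2D X1 X2 Y1 Y2 -!raddfD /=.
by rewrite !scalar_mx_is_scalar.
Qed.

Lemma scalar_marginalsZ a X : scalar_marginals X -> scalar_marginals (a *: X).
Proof.
case/andP=> /is_scalar_mxP[a1 X1] /is_scalar_mxP[a2 X2].
rewrite /scalar_marginals ptrace1Z ptrace2Z X1 X2 !scale_scalar_mx.
by rewrite !scalar_mx_is_scalar.
Qed.

Lemma ptrace2_normalized X : is_scalar_mx (ptrace2 X) -> \tr X != 0 ->
  ptrace2 ((\tr X)^-1 *: X) = m%:R^-1%:M.
Proof.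
case/is_scalar_mxP=> a X2; rewrite -mxtrace_ptrace2 X2 mxtrace_scalar => tr_neq0.
have a_neq0 : a != 0 by apply: contraNneq tr_neq0 => ->; rewrite mul0rn.
by rewrite ptrace2Z X2 scale_scalar_mx -[a *+ m]mulr_natr invfM mulrAC mulVf ?mul1r.
Qed.

Lemma ptrace1_normalized X : is_scalar_mx (ptrace1 X) -> \tr X != 0 ->
  ptrace1 ((\tr X)^-1 *: X) = n%:R^-1%:M.
Proof.
case/is_scalar_mxP=> a X1; rewrite -mxtrace_ptrace1 X1 mxtrace_scalar => tr_neq0.
have a_neq0 : a != 0 by apply: contraNneq tr_neq0 => ->; rewrite mul0rn.
by rewrite ptrace1Z X1 scale_scalar_mx -[a *+ n]mulr_natr invfM mulrAC mulVf ?mul1r.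
Qed.

End ScalarMarginals.

Section UnitaryDot.
Variables (C : numClosedFieldType) (n : nat) (U : 'M[C]_n).
Hypothesis Uu : U \is unitarymx.

Lemma unitarymx_row_dot x y : \sum_q U x q * (U y q)^* = (x == y)%:R.
Proof.
have /matrixP/(_ x y) := unitarymxP Uu; rewrite !mxE => <-.
by apply: eq_bigr => q _; rewrite !mxE.
Qed.

Lemma unitarymx_col_dot x y : \sum_p U p x * (U p y)^* = (x == y)%:R.
Proof.
have /matrixP/(_ y x) := mulmx1C (unitarymxP Uu); rewrite !mxE eq_sym => <-.
by apply: eq_bigr => p _; rewrite !mxE mulrC.
Qed.

End UnitaryDot.

Section ChoiOfUnitary.
Context {C : numClosedFieldType} {d1 d2 : nat} (U : 'M[C]_(d1 * d2)).

Lemma choi_unitaryE ra a rb b ra' a' rb' b' :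
  @choi_bip C d1 d2 d1 d2 (unitary_channel U)
    (tidx (tidx ra a) (tidx rb b)) (tidx (tidx ra' a') (tidx rb' b'))
  = (d1 * d2)%:R^-1 * (U (tidx a b) (tidx ra rb) * (U (tidx a' b') (tidx ra' rb'))^*).
Proof.
rewrite /choi_bip /swap_mid /id_tens /swap_mid_idx !mxE !tidxE /unitary_channel.
set Phi := (\matrix_(u, v) _).
have -> : Phi = (d1 * d2)%:R^-1 *: delta_mx (tidx ra rb) (tidx ra' rb').
  apply/matrixP => u v; rewrite /Phi !mxE !tidxE /tidx !mxtens_indexK /=.
  rewrite -/(tidx _ _) !tidxE -[u]tidxK -[v]tidxK !eq_tidx !tidxE.
  rewrite (eq_sym ra) (eq_sym ra') (eq_sym rb) (eq_sym rb') natrM invfM.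
  by case: eqP => _; case: eqP => _; case: eqP => _; case: eqP => _ /=;
    rewrite ?mulr0 ?mul0r ?mulr1.
rewrite (bigD1 (tidx ra' rb')) //= big1 ?addr0 => [|j /negbTE jq]; last first.
  by rewrite !mxE big1 ?mul0r // => k _; rewrite !mxE jq andbF !mulr0.
rewrite !mxE (bigD1 (tidx ra rb)) //= big1 ?addr0 => [|k /negbTE kp]; last first.
  by rewrite !mxE kp !mulr0.
by rewrite !mxE !eqxx /=; ring.
Qed.

Definition choi_realign : 'M[C]_(d2 * d2, d1 * d1) :=
  \matrix_(k, j) U (tidx (sndidx j) (sndidx k)) (tidx (fstidx j) (fstidx k)).

Lemma marg_choi_unitary :
  marg_RBB (@choi_bip C d1 d2 d1 d2 (unitary_channel U))
  = (d1 * d2)%:R^-1 *: (choi_realign *m choi_realign^t*).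
Proof.
apply/matrixP => k l; rewrite !mxE sum_tidx [in RHS]sum_tidx big_distrr /=.
apply: eq_bigr => ra _; rewrite big_distrr /=; apply: eq_bigr => a _.
by rewrite -[k]tidxK -[l]tidxK choi_unitaryE !mxE !tidxE mulrA.
Qed.

Lemma ptrace1_realign_gram : U \is unitarymx ->
  ptrace1 (choi_realign *m choi_realign^t*) = d1%:R%:M.
Proof.
move=> Uu; apply/matrixP => b b'; rewrite !mxE.
under eq_bigr do rewrite !mxE sum_tidx; under eq_bigr do
  under eq_bigr do under eq_bigr do rewrite !mxE !tidxE.
rewrite exchange_big; under eq_bigr do rewrite exchange_big; rewrite exchange_big /=.
under eq_bigr => a _ do
  rewrite -(@sum_tidx _ d1 d2 (fun q => U (tidx a b) q * (U (tidx a b') q)^*)).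
under eq_bigr do rewrite unitarymx_row_dot // eq_tidx eqxx.
by rewrite sumr_const card_ord mulrnAC.
Qed.

Lemma ptrace2_realign_gram : U \is unitarymx ->
  ptrace2 (choi_realign *m choi_realign^t*) = d1%:R%:M.
Proof.
move=> Uu; apply/matrixP => rb rb'; rewrite !mxE.
under eq_bigr do rewrite !mxE sum_tidx; under eq_bigr do
  under eq_bigr do under eq_bigr do rewrite !mxE !tidxE.
rewrite exchange_big; under eq_bigr do rewrite exchange_big /=.
under eq_bigr => ra _ do
  rewrite -(@sum_tidx _ d1 d2 (fun p => U p (tidx ra rb) * (U p (tidx ra rb'))^*)).
under eq_bigr do rewrite unitarymx_col_dot // eq_tidx eqxx.
by rewrite sumr_const card_ord mulrnAC.
Qed.

Lemma scalar_marginals_marg_choi_unitary : U \is unitarymx ->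
  scalar_marginals (marg_RBB (@choi_bip C d1 d2 d1 d2 (unitary_channel U))).
Proof.
move=> Uu; rewrite marg_choi_unitary; apply: scalar_marginalsZ.
rewrite /scalar_marginals ptrace1_realign_gram ?ptrace2_realign_gram //.
by rewrite !scalar_mx_is_scalar.
Qed.

Lemma mxtrace_marg_choi_unitary : U \is unitarymx -> (0 < d1 * d2)%N ->
  \tr (marg_RBB (@choi_bip C d1 d2 d1 d2 (unitary_channel U))) = 1.
Proof.
move=> Uu d_gt0; rewrite marg_choi_unitary mxtraceZ -mxtrace_ptrace2.
rewrite ptrace2_realign_gram // mxtrace_scalar -[_ *+ d2]mulr_natr -natrM.
by rewrite mulVf // pnatr_eq0 -lt0n.
Qed.

End ChoiOfUnitary.

Lemma interpolation_poly (F : fieldType) (f : F -> F) (s : seq F) :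
  exists q : {poly F}, {in s, forall x, q.[x] = f x}.
Proof.
elim: s => [|a s [q Hq]]; first by exists 0.
have [as_|as_] := boolP (a \in s).
  by exists q => x; rewrite inE => /predU1P[->|]; apply: Hq.
pose p := \prod_(b <- s) ('X - b%:P).
have pa : p.[a] != 0 by rewrite -rootE root_prod_XsubC.
exists (q + ((f a - q.[a]) / p.[a]) *: p) => x; rewrite inE => /predU1P[->|xs].
  by rewrite hornerD hornerZ mulfVK // addrC subrK.
have /rootP px : root p x by rewrite root_prod_XsubC.
by rewrite hornerD hornerZ px mulr0 addr0 Hq.
Qed.

Section SpectralSquareRoot.
Variable C : numClosedFieldType.

Lemma gram_hermitian m n (W : 'M[C]_(m, n)) : (W *m W^t*)^t* = W *m W^t*.
Proof. by rewrite trmx_mul map_mxM trmxCK. Qed.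

Lemma gram_normalmx m n (W : 'M[C]_(m, n)) : W *m W^t* \is normalmx.
Proof. by apply/normalmxP; rewrite gram_hermitian. Qed.

Lemma scale_gram m n (c : C) (W : 'M[C]_(m, n)) : 0 <= c ->
  c *: (W *m W^t*) = (sqrtC c *: W) *m (sqrtC c *: W)^t*.
Proof.
move=> c_ge0; rewrite linearZ /= map_mxZ /= -scalemxAl -scalemxAr scalerA.
by rewrite conj_Creal ?ger0_real ?sqrtC_ge0 // -expr2 sqrtCK.
Qed.

Section Normal.
Context {n : nat} {A : 'M[C]_n}.
Hypothesis A_normal : A \is normalmx.
Let P := spectralmx A.
Let d := spectral_diag A.

Lemma normalmx_spectralE : A = P^t* *m diag_mx d *m P.
Proof. by rewrite -invmx_unitary ?spectral_unitarymx //; apply/orthomx_spectralP. Qed.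

Lemma spectral_diag_mxE : diag_mx d = P *m A *m P^t*.
Proof.
have PPt : P *m P^t* = 1%:M by apply/unitarymxP/spectral_unitarymx.
by rewrite {1}normalmx_spectralE !mulmxA PPt mul1mx -!mulmxA PPt mulmx1.
Qed.

Lemma mxtrace_spectral_diag : \tr A = \sum_i d 0 i.
Proof.
have PtP : P^t* *m P = 1%:M by apply/mulmx1C/unitarymxP/spectral_unitarymx.
by rewrite -mxtrace_diag spectral_diag_mxE mxtrace_mulC mulmxA PtP mul1mx.
Qed.

End Normal.

Lemma mxtrace_sqrtm n (A : 'M[C]_n) :
  \tr (sqrtm A) = \sum_i sqrtC (spectral_diag A 0 i).
Proof.
have PtP : spectralmx A *m (spectralmx A)^t* = 1%:M.
  by apply/unitarymxP/spectral_unitarymx.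
rewrite /sqrtm mxtrace_mulC mulmxA PtP mul1mx mxtrace_diag.
by apply: eq_bigr => i _; rewrite mxE.
Qed.

Lemma sqrtm_horner n (A : 'M[C]_n.+1) : A \is normalmx ->
  exists q, sqrtm A = horner_mx A q.
Proof.
move=> A_normal; set d := spectral_diag A.
have [q Hq] := interpolation_poly _ sqrtC [seq d 0 i | i <- enum 'I_n.+1].
exists q; rewrite {2}(normalmx_spectralE A_normal) -invmx_unitary;
  last exact: spectral_unitarymx.
rewrite horner_mx_uconjC ?spectral_unit // horner_mx_diag invmx_unitary;
  last exact: spectral_unitarymx.
congr (_ *m diag_mx _ *m _); apply/matrixP => i j.
by rewrite !mxE (ord1 i) Hq // map_f ?mem_enum.
Qed.

Lemma spectral_diag_gram_ge0 m n (W : 'M[C]_(m, n)) i :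
  0 <= spectral_diag (W *m W^t*) 0 i.
Proof.
set P := spectralmx (W *m W^t*).
have -> : spectral_diag (W *m W^t*) 0 i = diag_mx (spectral_diag (W *m W^t*)) i i.
  by rewrite mxE eqxx mulr1n.
rewrite spectral_diag_mxE ?gram_normalmx // -/P.
have -> : P *m (W *m W^t*) *m P^t* = (P *m W) *m (P *m W)^t*.
  by rewrite trmx_mul map_mxM !mulmxA.
by rewrite mxE; apply: sumr_ge0 => k _; rewrite !mxE mul_conjC_ge0.
Qed.

Lemma mxtrace_sqrtm_gram_eq0 m n (W : 'M[C]_(m, n)) :
  \tr (sqrtm (W *m W^t*)) = 0 -> \tr (W *m W^t*) = 0.
Proof.
rewrite mxtrace_sqrtm mxtrace_spectral_diag ?gram_normalmx // => sqrt_eq0.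
apply: big1 => i _; apply/eqP; rewrite -sqrtC_eq0; apply/eqP.
by apply: (psumr_eq0P _ sqrt_eq0) => // j _; rewrite sqrtC_ge0 spectral_diag_gram_ge0.
Qed.

End SpectralSquareRoot.

Section TwoQubits.
Variable C : numClosedFieldType.
Implicit Types X Y : 'M[C]_(2 * 2).

Definition entry {n} (A : 'M[C]_n.+1) (a b : nat) : C := A (inord a) (inord b).

Lemma entryE {n} (A : 'M[C]_n.+1) i j : A i j = entry A i j.
Proof. by rewrite /entry !inord_val. Qed.

Lemma is_scalar_mx2P (A : 'M[C]_2) :
  reflect [/\ entry A 0 1 = 0, entry A 1 0 = 0 & entry A 0 0 = entry A 1 1]
          (is_scalar_mx A).
Proof.
apply: (iffP is_scalar_mxP) => [[a ->]|[A01 A10 A11]].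
  by rewrite /entry !mxE -!val_eqE /= !inordK.
exists (entry A 0 0); apply/matrixP => i j; rewrite mxE entryE.
by case: i j => [[|[|//]] ?] [[|[|//]] ?]; rewrite /= ?mulr1n ?mulr0n.
Qed.

Lemma ptrace1_entry X a b : (a < 2)%N -> (b < 2)%N ->
  entry (ptrace1 X) a b = entry X a b + entry X (2 + a) (2 + b).
Proof.
move=> a2 b2; rewrite /entry mxE !big_ord_recl big_ord0 addr0 !(entryE X) /=.
by rewrite /bump /= !inordK ?mul0n ?mul1n ?add0n //; lia.
Qed.

Lemma ptrace2_entry X a b : (a < 2)%N -> (b < 2)%N ->
  entry (ptrace2 X) a b = entry X (a * 2) (b * 2) + entry X (a * 2 + 1) (b * 2 + 1).
Proof.
move=> a2 b2; rewrite /entry mxE !big_ord_recl big_ord0 addr0 !(entryE X) /=.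
by rewrite /bump /= !inordK ?addn0 //; lia.
Qed.

Lemma scalar_marginals22P X :
  reflect ([/\ entry X 2 3 = - entry X 0 1, entry X 3 2 = - entry X 1 0,
               entry X 1 3 = - entry X 0 2 & entry X 3 1 = - entry X 2 0] /\
           entry X 2 2 = entry X 1 1 /\ entry X 3 3 = entry X 0 0)
          (scalar_marginals X).
Proof.
rewrite /scalar_marginals.
apply: (iffP andP) => [[]|[[X23 X32 X13 X31] [X22 X33]]]; last first.
  by split; apply/is_scalar_mx2P; rewrite ?ptrace1_entry ?ptrace2_entry //=
    ?X23 ?X32 ?X13 ?X31 ?X22 ?X33; split; ring.
move=> /is_scalar_mx2P[] + + + /is_scalar_mx2P[].
rewrite ?ptrace1_entry ?ptrace2_entry //= ?(add0n, add1n, addn0, addn1, mul0n, mul1n).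
move=> /addr0_eq X23 /addr0_eq X32 diag1 /addr0_eq X13 /addr0_eq X31 diag2.
have X22 : entry X 2 2 = entry X 1 1.
  have : (entry X 2 2 - entry X 1 1) *+ 2
         = (entry X 0 0 + entry X 2 2 - (entry X 1 1 + entry X 3 3))
         - (entry X 0 0 + entry X 1 1 - (entry X 2 2 + entry X 3 3)) by ring.
  by rewrite diag1 diag2 !subrr => /eqP; rewrite mulrn_eq0 subr_eq0 => /eqP.
split; first by split; apply/esym.
by split=> //; move: diag1; rewrite X22 addrC => /addrI/esym.
Qed.

Lemma entry_mul n (A B : 'M[C]_n.+1) a b :
  entry (A *m B) a b = \sum_(k < n.+1) entry A a k * entry B k b.
Proof. by rewrite /entry mxE; apply: eq_bigr => k _; rewrite !inord_val. Qed.

Lemma scalar_marginals22_jordan X Y :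
  scalar_marginals X -> scalar_marginals Y -> scalar_marginals (X * Y + Y * X).
Proof.
move=> /scalar_marginals22P[[X23 X32 X13 X31] [X22 X33]].
move=> /scalar_marginals22P[[Y23 Y32 Y13 Y31] [Y22 Y33]].
apply/scalar_marginals22P.
have entryD a b : entry (X * Y + Y * X) a b = entry (X *m Y) a b + entry (Y *m X) a b.
  by rewrite /entry mxE.
rewrite !entryD !entry_mul !big_ord_recl !big_ord0 /= /bump /= ?(addn0, add1n).
rewrite X23 X32 X13 X31 X22 X33 Y23 Y32 Y13 Y31 Y22 Y33.
by split; [split | split]; ring.
Qed.

Lemma scalar_marginals22X X k : scalar_marginals X -> scalar_marginals (X ^+ k).
Proof.
move=> X_scalar; elim: k => [|k IHk]; first exact: scalar_marginals_scalar.
have -> : X ^+ k.+1 = 2%:R^-1 *: (X * X ^+ k + X ^+ k * X).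
  by rewrite -exprS -exprSr -mulr2n -scaler_nat scalerA mulVf ?scale1r ?pnatr_eq0.
exact/scalar_marginalsZ/scalar_marginals22_jordan.
Qed.

Lemma scalar_marginals22_horner X (q : {poly C}) :
  scalar_marginals X -> scalar_marginals (horner_mx X q : 'M_(2 * 2)).
Proof.
move=> X_scalar; rewrite -[q]coefK poly_def rmorph_sum /=.
apply: (big_ind (@scalar_marginals C 2 2)) => [|A B|i _].
- by rewrite -(scale0r 1%:M); apply/scalar_marginalsZ/scalar_marginals_scalar.
- exact: scalar_marginalsD.
- rewrite linearZ /= rmorphXn /= horner_mx_X.
  exact/scalar_marginalsZ/scalar_marginals22X.
Qed.

End TwoQubits.

Theorem lemma9 (C : numClosedFieldType) (U : 'M[C]_(2 * 2)) :
  U \is unitarymx ->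
  let PhiU := @choi_bip C 2 2 2 2 (unitary_channel U) in
  let S := sqrtm (marg_RBB PhiU) in
  let rho := (\tr S)^-1 *: S in
  ptrace2 rho = (2%:R)^-1 *: 1%:M /\ ptrace1 rho = (2%:R)^-1 *: 1%:M.
Proof.
move=> Uu PhiU S rho.
pose K := sqrtC (2 * 2)%:R^-1 *: choi_realign U.
have M_gram : marg_RBB PhiU = K *m K^t*.
  by rewrite marg_choi_unitary scale_gram // invr_ge0 ler0n.
have [q S_poly] : exists q, S = horner_mx (K *m K^t*) q.
  by rewrite /S M_gram; apply/sqrtm_horner/gram_normalmx.
have /andP[S1 S2] : scalar_marginals S.
  rewrite S_poly -M_gram.
  exact/scalar_marginals22_horner/scalar_marginals_marg_choi_unitary.
have trS : \tr S != 0.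
  apply/eqP; rewrite /S M_gram => /mxtrace_sqrtm_gram_eq0/eqP.
  by rewrite -M_gram mxtrace_marg_choi_unitary ?oner_eq0.
by rewrite !scalemx1; split; [exact: ptrace2_normalized | exact: ptrace1_normalized].
Qed.
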